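(* Under the standing setup, for all $n\ge n_0$, $$\mathbb{E}[\phi_{n,k}]\ge K^{-1}\alpha^{\ell}e^{Pk},$$ and moreover $$\lim_{n\to\infty}\frac1k\log\mathbb{E}[\phi_{n,k}]=P+\log\alpha.$$
   Context: Standing setup. $\mathcal{A}$ is a finite alphabet, $X\subset\mathcal{A}^{\mathbb{Z}}$ a non-trivial topologically mixing SFT with left shift $\sigma$, $f:X\to\mathbb{R}$ H\''older continuous with pressure $P=P_X(f)$, and $\mu$ the Gibbs measure (unique equilibrium state) of $f$. $B_m(X)$ is the set of words of length $m$ in $X$; $[w]=\{x\in X:x_0\dots x_{|w|-1}=w\}$, $\mu(w)=\mu([w])$. For $w\in B_m(X)$, $S_mf(w)=\sup_{x\in[w]}\sum_{i=0}^{m-1}f(\sigma^ix)$. $K>1$ is a constant such that: (i) for all $m\ge1$, $x\in X$: $K^{-1}\le\mu(x_0\dots x_{m-1})/\exp(-Pm+\sum_{i=0}^{m-1}f(\sigma^ix))\le K$; (ii) $\mu(uv)\le K\mu(u)\mu(v)$ and $\mu(\sigma^{-|u|}[v]\mid[u])\le K\mu(v)$ whenever $uv\in B(X)$. $\gamma_0=\inf\{\gamma>0:\exists n_0\ \forall m\ge n_0\ \forall u\in B_m(X),\ \mu(u)\le\gamma^m\}$. Parameters: $\alpha\in(\gamma_0,1]$; $\gamma\in(\gamma_0,\alpha)$; $n_0$ such that $\mu(u)\le\gamma^{|u|}$ for all $u\in B(X)$ with $|u|\ge n_0$; $k=k(n)$ with $n/k\to0$ and $k=o(n^2/\log n)$;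 $\ell=k-n+1$. Random SFT: for each $n$, $\mathcal{F}_n\subset B_n(X)$ is random, each word included independently with probability $1-\alpha$; $\mathbb{E}$ is expectation. For a word $u$ of length $\ge n$, $W_n(u)$ is the set of distinct length-$n$ subwords of $u$, and $\xi_u=1$ if $W_n(u)\cap\mathcal{F}_n=\emptyset$, $\xi_u=0$ otherwise. $\phi_{n,k}=\sum_{u\in B_k(X)}e^{S_kf(u)}\xi_u$. *)

From Stdlib Require Import Reals ZArith ClassicalEpsilon.
From mathcomp Require Import all_boot.

Set Implicit Arguments.
Unset Strict Implicit.
Unset Printing Implicit Defensive.

Local Open Scope R_scope.

Definition asbool (Q : Prop) : bool :=
  if excluded_middle_informative Q then true else false.

Definition rsum {T : Type} (s : seq T) (F : T -> R) : R :=
  foldr (fun x acc => F x + acc) 0 s.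

(* supremum / infimum of a set of reals (junk value if it does not exist) *)
Definition is_glb (E : R -> Prop) (g : R) : Prop :=
  (forall x, E x -> g <= x) /\ (forall b, (forall x, E x -> b <= x) -> b <= g).
Definition Rsup (E : R -> Prop) : R := epsilon (inhabits 0) (fun s => is_lub E s).
Definition Rinf (E : R -> Prop) : R := epsilon (inhabits 0) (fun s => is_glb E s).

Section Shift.
Variable A : finType.

Definition config := Z -> A.

Definition shiftn (i : nat) (x : config) : config := fun j => x (j + Z.of_nat i)%Z.

Definition word_at (x : config) (i : Z) (m : nat) : seq A :=
  [seq x (i + Z.of_nat j)%Z | j <- iota 0 m].

Definition is_SFT (X : config -> Prop) : Prop :=
  exists Fb : seq (seq A), forall x,
    X x <-> (forall w, w \in Fb -> forall i : Z, word_at x i (size w) <> w).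

Definition nontrivial (X : config -> Prop) : Prop :=
  exists x y, X x /\ X y /\ x <> y.

(* topological mixing, tested on the cylinder base of the topology *)
Definition cyl_at (i : Z) (w : seq A) (x : config) : Prop := word_at x i (size w) = w.
Definition top_mixing (X : config -> Prop) : Prop :=
  forall (i j : Z) (u v : seq A),
    (exists x, X x /\ cyl_at i u x) -> (exists y, X y /\ cyl_at j v y) ->
    exists N : nat, forall m : nat, (N <= m)%N ->
      exists z, X z /\ cyl_at i u z /\ cyl_at j v (shiftn m z).

(* Hoelder continuity on X w.r.t. the standard metric d(x,y)=2^{-min{|i| : x_i<>y_i}} *)
Definition holder (X : config -> Prop) (f : config -> R) : Prop :=
  exists C theta : R, 0 < theta < 1 /\
    forall (x y : config) (m : nat), X x -> X y ->
      (forall i : Z, (Z.abs i <= Z.of_nat m)%Z -> x i = y i) ->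
      Rabs (f x - f y) <= C * theta ^ m.

Definition inB (X : config -> Prop) (w : seq A) : Prop :=
  exists x i, X x /\ word_at x i (size w) = w.

Definition Bset (X : config -> Prop) (m : nat) : {set m.-tuple A} :=
  [set w : m.-tuple A | asbool (inB X (val w))].

Definition birk (f : config -> R) (m : nat) (x : config) : R :=
  rsum (iota 0 m) (fun i => f (shiftn i x)).

Definition Sk (X : config -> Prop) (f : config -> R) (w : seq A) : R :=
  Rsup (fun s => exists x, X x /\ word_at x 0 (size w) = w /\ s = birk f (size w) x).

Definition is_pressure (X : config -> Prop) (f : config -> R) (P : R) : Prop :=
  Un_cv (fun m => ln (rsum (enum (Bset X m)) (fun w => exp (Sk X f (val w)))) / INR m) P.

(* A shift-invariant Borel probability measure on X, given by its values
   mu(w) = mu([w]) on cylinders (Kolmogorov consistent family). *)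
Definition shift_inv_prob (X : config -> Prop) (mu : seq A -> R) : Prop :=
  [/\ forall w, 0 <= mu w,
      mu [::] = 1,
      forall w, rsum (enum A) (fun a => mu (rcons w a)) = mu w,
      forall w, rsum (enum A) (fun a => mu (a :: w)) = mu w
    & forall w, ~ inB X w -> mu w = 0].

Definition gamma0 (X : config -> Prop) (mu : seq A -> R) : R :=
  Rinf (fun g => 0 < g /\ exists N : nat, forall (m : nat) (u : seq A),
          (N <= m)%N -> inB X u -> size u = m -> mu u <= g ^ m).

Definition has_subword (n : nat) (w u : seq A) : bool :=
  has (fun i => take n (drop i u) == w) (iota 0 (size u - n + 1)).

Definition xi (n : nat) (F : {set n.-tuple A}) (u : seq A) : bool :=
  ~~ [exists w in F, has_subword n (val w) u].

(* phi_{n,k} for a given realisation F of F_n *)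
Definition phi (X : config -> Prop) (f : config -> R) (n k : nat)
    (F : {set n.-tuple A}) : R :=
  rsum (enum (Bset X k)) (fun u => exp (Sk X f (val u)) * (if xi F (val u) then 1 else 0)).

(* E[phi_{n,k}], each word of B_n(X) in F_n independently with prob. 1-alpha *)
Definition Ephi (X : config -> Prop) (f : config -> R) (alpha : R) (n k : nat) : R :=
  rsum (enum [set F : {set n.-tuple A} | F \subset Bset X n])
    (fun F => (1 - alpha) ^ #|F| * alpha ^ (#|Bset X n| - #|F|) * phi X f k F).

End Shift.

(* Averaging over the random set [F_n] first, E[phi_{n,k}] is the sum over [u] in
   B_k(X) of exp(S_k f(u)) alpha^|W_n(u)|, and by the Gibbs property exp(S_k f(u))
   is e^{Pk} mu(u) up to a factor K.  Since |W_n(u)| <= l and the mu(u) sum to 1,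
   this gives the lower bound.  Conversely |W_n(u)| >= l - R(u), where R(u) counts
   the positions whose length-n window already occurred earlier in u.  A repeat at
   position s determines the next n letters from the prefix, at a cost of at most
   s K gamma^n in measure; after splitting the positions by residue mod n, the
   windows in one class are disjoint, and induction gives
   sum_u mu(u) alpha^-R(u) <= n (1 + alpha^-n k K gamma^n)^l.  As gamma < alpha and
   k <= n^2 eventually, the correction term tends to 0, and taking logarithms
   yields the limit P + log alpha. *)

From Stdlib Require Import Reals ZArith ClassicalEpsilon Lra Lia.
From mathcomp Require Import all_boot zify.
From mathcomp Require ssralg Rstruct.

Set Implicit Arguments.
Unset Strict Implicit.
Unset Printing Implicit Defensive.

Local Open Scope R_scope.

Section FiniteSums.
Variable T : Type.
Implicit Types (s : seq T) (F G : T -> R).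

Lemma rsum_cons x s F : rsum (x :: s) F = F x + rsum s F.
Proof. by []. Qed.

Lemma rsum_cat s1 s2 F : rsum (s1 ++ s2) F = rsum s1 F + rsum s2 F.
Proof. elim: s1 => [|x s IH]; rewrite /= ?cat_cons ?rsum_cons ?IH /=; lra. Qed.

Lemma rsumD s F G : rsum s (fun x => F x + G x) = rsum s F + rsum s G.
Proof. elim: s => [|x s IH]; rewrite ?rsum_cons ?IH /=; lra. Qed.

Lemma rsumZl s c F : rsum s (fun x => c * F x) = c * rsum s F.
Proof. elim: s => [|x s IH]; rewrite ?rsum_cons ?IH /=; lra. Qed.

Lemma rsumZr s c F : rsum s (fun x => F x * c) = rsum s F * c.
Proof. elim: s => [|x s IH]; rewrite ?rsum_cons ?IH /=; lra. Qed.

Lemma rsum_const s c : rsum s (fun _ => c) = INR (size s) * c.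
Proof.
elim: s => [|x s IH]; first by rewrite /=; lra.
change (size (x :: s)) with (size s).+1; rewrite rsum_cons IH S_INR; lra.
Qed.

Lemma eq_rsum s F G : (forall x, F x = G x) -> rsum s F = rsum s G.
Proof. by move=> eFG; elim: s => [|x s IH]; rewrite ?rsum_cons ?IH ?eFG. Qed.

Lemma rsum_filter (p : pred T) s F :
  rsum (filter p s) F = rsum s (fun x => if p x then F x else 0).
Proof. elim: s => [|x s IH] //=; case: (p x); rewrite ?rsum_cons IH //; lra. Qed.

Lemma has_le_rsum (p : pred T) s :
  (if has p s then 1 else 0) <= rsum s (fun x => if p x then 1 else 0).
Proof.
elim: s => [|x s IH]; first by rewrite /=; lra.
by rewrite rsum_cons [has _ _]/=; case: (p x); case: (has p s) in IH *; rewrite /=; lra.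
Qed.
End FiniteSums.

Lemma rsum_exchange (T U : Type) (s : seq T) (t : seq U) (F : T -> U -> R) :
  rsum s (fun x => rsum t (F x)) = rsum t (fun y => rsum s (F^~ y)).
Proof.
elim: s => [|x s IH]; first by rewrite (@eq_rsum _ t _ (fun=> 0)) // rsum_const Rmult_0_r.
by rewrite rsum_cons IH -rsumD; apply: eq_rsum.
Qed.

Lemma rsum_map (T U : Type) (h : T -> U) (s : seq T) (F : U -> R) :
  rsum (map h s) F = rsum s (F \o h).
Proof. by elim: s => [|x s IH] //; rewrite map_cons !rsum_cons IH. Qed.

Lemma rsum_allpairs (T U V : Type) (h : T -> U -> V) (s : seq T) (t : seq U) (F : V -> R) :
  rsum [seq h x y | x <- s, y <- t] F = rsum s (fun x => rsum t (fun y => F (h x y))).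
Proof.
elim: s => [|x s IH] //.
by rewrite allpairs_cons rsum_cat rsum_map IH rsum_cons.
Qed.

Section FiniteSumsEq.
Variable T : eqType.
Implicit Types (s : seq T) (F G : T -> R).

Lemma eq_in_rsum s F G : {in s, F =1 G} -> rsum s F = rsum s G.
Proof.
elim: s => [|x s IH] eFG //; rewrite !rsum_cons eFG ?mem_head // IH //.
by move=> y sy; apply: eFG; rewrite in_cons sy orbT.
Qed.

Lemma ler_rsum s F G : (forall x, x \in s -> F x <= G x) -> rsum s F <= rsum s G.
Proof.
elim: s => [|x s IH] leFG; first exact: Rle_refl.
rewrite !rsum_cons; apply: Rplus_le_compat; first exact/leFG/mem_head.
by apply: IH => y sy; apply: leFG; rewrite in_cons sy orbT.
Qed.

Lemma rsum_ge0 s F : (forall x, x \in s -> 0 <= F x) -> 0 <= rsum s F.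
Proof. by move=> F0; rewrite -(Rmult_0_r (INR (size s))) -rsum_const; apply: ler_rsum. Qed.

Lemma ler_term_rsum s F x : (forall y, y \in s -> 0 <= F y) -> x \in s -> F x <= rsum s F.
Proof.
elim: s => [|y s IH] F0 //; rewrite rsum_cons in_cons => /orP xys.
have F0s : forall z, z \in s -> 0 <= F z by move=> z sz; apply: F0; rewrite in_cons sz orbT.
have := F0 y (mem_head _ _); have := rsum_ge0 F0s.
case: xys => [/eqP -> | /(IH F0s)]; lra.
Qed.

Lemma perm_rsum s t F : perm_eq s t -> rsum s F = rsum t F.
Proof.
elim: s t => [|x s IH] t; first by rewrite perm_sym => /perm_nilP ->.
move=> pst; have xt : x \in t by rewrite -(perm_mem pst) mem_head.
case/splitPr: xt pst => t1 t2 pst.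
rewrite rsum_cons (IH (t1 ++ t2)) ?rsum_cat ?rsum_cons; first lra.
by rewrite -(perm_cons x) (perm_trans pst) // -cat1s perm_catCA.
Qed.

Lemma rsum_pred_le_single s (p : pred T) F M :
  uniq s -> {in s &, forall x y, p x -> p y -> x = y} ->
  (forall x, x \in s -> p x -> F x <= M) -> 0 <= M ->
  rsum s (fun x => if p x then F x else 0) <= M.
Proof.
elim: s => [_ _ _ M0 | x s IH]; first exact: M0.
rewrite cons_uniq => /andP [xs us] p1 FM M0; rewrite rsum_cons /=.
have p1s : {in s &, forall y z, p y -> p z -> y = z}.
  by move=> y z sy sz; apply: p1; rewrite in_cons ?sy ?sz orbT.
case px: (p x).
  have -> : rsum s (fun y => if p y then F y else 0) = 0.
    rewrite (@eq_in_rsum s _ (fun=> 0)) ?rsum_const ?Rmult_0_r // => y sy.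
    case py: (p y) => //.
    by move: xs; rewrite (p1 x y (mem_head _ _) _ px py) ?sy // in_cons sy orbT.
  by have := FM x (mem_head _ _) px; lra.
have := IH us p1s (fun y sy => FM y (ltac:(by rewrite in_cons sy orbT))) M0; lra.
Qed.
End FiniteSumsEq.

Lemma asboolP (Q : Prop) : asbool Q <-> Q.
Proof. by rewrite /asbool; case: excluded_middle_informative. Qed.

Lemma ln_le x y : 0 < x -> x <= y -> ln x <= ln y.
Proof. by move=> x0 [xy|<-]; [left; apply: ln_increasing | right]. Qed.

Lemma exp_le x y : x <= y -> exp x <= exp y.
Proof. by move=> [xy|<-]; [left; apply: exp_increasing | right]. Qed.

Lemma pow_le_decr a i j : 0 <= a <= 1 -> (i <= j)%N -> a ^ j <= a ^ i.
Proof.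
move=> a01 ij; rewrite -(subnKC ij) pow_add -{2}(Rmult_1_r (a ^ i)).
apply: Rmult_le_compat_l; first by apply: pow_le; lra.
by rewrite -(pow1 (j - i)); apply: pow_incr; lra.
Qed.

Section Words.
Variable A : finType.
Implicit Types (w : seq A) (F : seq A -> R).

Fixpoint words (m : nat) : seq (seq A) :=
  if m is m'.+1 then [seq c :: v | c <- enum A, v <- words m'] else [:: [::]].

Lemma mem_words m w : (w \in words m) = (size w == m).
Proof.
elim: m w => [|m IH] [|a w] //=.
  by apply/allpairsP => [[[b v] /= [_ _]]].
apply/allpairsP/idP => [[[b v] /= [_ vm [_ ->]]]|]; first by rewrite eqSS -IH.
by move=> wm; exists (a, w); rewrite /= mem_enum IH.
Qed.

Lemma words_uniq m : uniq (words m).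
Proof.
elim: m => [|m IH] //=; apply: allpairs_uniq => //; first exact: enum_uniq.
by move=> [a w] [b v] _ _ /= [-> ->].
Qed.

Lemma rsum_wordsD m1 m2 F :
  rsum (words (m1 + m2)) F = rsum (words m1) (fun a => rsum (words m2) (fun b => F (a ++ b))).
Proof.
elim: m1 F => [|m1 IH] F; first by rewrite add0n /= Rplus_0_r.
by rewrite addSn /= !rsum_allpairs; apply: eq_rsum => a; rewrite IH.
Qed.

Lemma rsum_tuples m F :
  rsum (enum [set: m.-tuple A]) (fun t => F (val t)) = rsum (words m) F.
Proof.
rewrite -(rsum_map val) /=; apply: perm_rsum; apply: uniq_perm.
- by rewrite (map_inj_uniq val_inj) enum_uniq.
- exact: words_uniq.
move=> w; rewrite mem_words; apply/mapP/idP => [[t _ ->]|wm]; first by rewrite size_tuple.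
by exists (Tuple wm); rewrite ?mem_enum ?inE.
Qed.

Lemma rsum_enum_set m (S : {set m.-tuple A}) (F : m.-tuple A -> R) :
  rsum (enum S) F = rsum (enum [set: m.-tuple A]) (fun t => if t \in S then F t else 0).
Proof.
by rewrite enum_setT /enum_mem rsum_filter.
Qed.
End Words.

Section ConsistentFamily.
Variables (A : finType) (mu : seq A -> R).
Hypothesis mu_rcons : forall w, rsum (enum A) (fun a => mu (rcons w a)) = mu w.

Lemma rsum_mu_extensions m w : rsum (words A m) (fun v => mu (w ++ v)) = mu w.
Proof.
elim: m w => [|m IH] w; first by rewrite /= cats0 Rplus_0_r.
rewrite /= rsum_allpairs -mu_rcons; apply: eq_rsum => a.
by rewrite -IH; apply: eq_rsum => v; rewrite cat_rcons.
Qed.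

Lemma rsum_mu_prefix m L (G : seq A -> R) : (m <= L)%N ->
  rsum (words A L) (fun u => mu u * G (take m u)) = rsum (words A m) (fun w => mu w * G w).
Proof.
move=> mL; rewrite -(subnKC mL) rsum_wordsD; apply: eq_in_rsum => w.
rewrite mem_words => /eqP wm.
rewrite (eq_rsum _ (G := fun v => mu (w ++ v) * G w)) => [|v]; last by rewrite take_size_cat.
by rewrite rsumZr rsum_mu_extensions.
Qed.
End ConsistentFamily.

Section Cylinders.
Variable A : finType.
Implicit Types (x : config A) (u v : seq A).

Lemma size_word_at x i m : size (word_at x i m) = m.
Proof. by rewrite size_map size_iota. Qed.

Lemma word_atD x i m1 m2 :
  word_at x i (m1 + m2) = word_at x i m1 ++ word_at x (i + Z.of_nat m1) m2.
Proof.
rewrite /word_at iotaD map_cat; congr (_ ++ _).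
have -> : iota (0 + m1) m2 = map (addn m1) (iota 0 m2) by rewrite -iotaDl addn0.
rewrite -map_comp.
by apply: eq_map => j /=; rewrite Nat2Z.inj_add Z.add_assoc.
Qed.

Variable X : config A -> Prop.

Lemma inB_catl u v : inB X (u ++ v) -> inB X u.
Proof.
move=> [x [i [Xx]]]; rewrite size_cat word_atD => /eqP.
by rewrite eqseq_cat ?size_word_at // => /andP [/eqP uw _]; exists x, i.
Qed.

Lemma inB_catr u v : inB X (u ++ v) -> inB X v.
Proof.
move=> [x [i [Xx]]]; rewrite size_cat word_atD => /eqP.
by rewrite eqseq_cat ?size_word_at // => /andP [_ /eqP vw]; exists x, (i + Z.of_nat (size u))%Z.
Qed.

Lemma inB_word_at x m : X x -> inB X (word_at x 0 m).
Proof. by move=> Xx; exists x, 0%Z; rewrite size_word_at. Qed.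

Lemma inB_word_at0 u : is_SFT X -> inB X u -> exists2 y, X y & word_at y 0 (size u) = u.
Proof.
move=> [Fb XF] [x [i [Xx xu]]].
have shift_word j m : word_at (fun t => x (t + i)%Z) j m = word_at x (j + i) m.
  by apply: eq_map => t; congr x; lia.
exists (fun t => x (t + i)%Z); last by rewrite shift_word.
apply/XF => w wF j; rewrite shift_word; exact: (XF x).1 Xx w wF (j + i)%Z.
Qed.
End Cylinders.

Lemma ratio_bounds K a b : 0 < b -> 0 < K -> / K <= a / b <= K -> / K * a <= b <= K * a.
Proof.
move=> b0 K0 [lo hi]; have Ki : 0 < / K by apply: Rinv_0_lt_compat.
have ab : a = a / b * b by field; lra.
split.
- rewrite ab -Rmult_assoc; have := Rmult_le_compat_l (/ K) _ _ (Rlt_le _ _ Ki) hi.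
  rewrite Rinv_l; nra.
- rewrite ab -Rmult_assoc; have := Rmult_le_compat_l K _ _ (Rlt_le _ _ K0) lo.
  rewrite Rinv_r; nra.
Qed.

Section Gibbs.
Variables (A : finType) (X : config A -> Prop) (f : config A -> R) (mu : seq A -> R) (P K : R).
Hypothesis SFT : is_SFT X.
Hypothesis mu_nil : mu [::] = 1.
Hypothesis K1 : 1 < K.
Hypothesis gibbs : forall (m : nat) (x : config A), (1 <= m)%N -> X x ->
  / K <= mu (word_at x 0 m) / exp (- P * INR m + birk f m x) <= K.

Let K0 : 0 < K. Proof. lra. Qed.

Lemma gibbs_ratio_bounds m x : X x -> / K <= mu (word_at x 0 m) / exp (- P * INR m + birk f m x) <= K.
Proof.
case: m => [|m] Xx; last exact: gibbs.
rewrite /= mu_nil Rmult_0_r Rplus_0_r exp_0 Rdiv_1_r.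
by split; [rewrite -Rinv_1; apply: Rinv_le_contravar|]; lra.
Qed.

Lemma exp_birk_bounds m x : X x ->
  / K * exp (P * INR m) * mu (word_at x 0 m) <= exp (birk f m x) <=
  K * exp (P * INR m) * mu (word_at x 0 m).
Proof.
move=> Xx; set E := exp (- P * INR m + birk f m x); set e := exp (P * INR m).
have [lo hi] := ratio_bounds (exp_pos _) K0 (gibbs_ratio_bounds m Xx); rewrite -/E in lo hi.
have -> : exp (birk f m x) = e * E by rewrite /e /E -exp_plus; congr exp; ring.
have e0 : 0 <= e by apply/Rlt_le/exp_pos.
split; [have := Rmult_le_compat_l _ _ _ e0 lo | have := Rmult_le_compat_l _ _ _ e0 hi];
  rewrite -!Rmult_assoc (Rmult_comm e); lra.
Qed.

Lemma mu_pos u : inB X u -> 0 < mu u.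
Proof.
case/(inB_word_at0 SFT) => y Xy <-.
have [_ hi] := ratio_bounds (exp_pos _) K0 (gibbs_ratio_bounds (size u) Xy).
have := exp_pos (- P * INR (size u) + birk f (size u) y); nra.
Qed.

Lemma Sk_bounds u : inB X u ->
  / K * exp (P * INR (size u)) * mu u <= exp (Sk X f u) <= K * exp (P * INR (size u)) * mu u.
Proof.
move=> Bu; have mu0 := mu_pos Bu.
set E := fun s => exists x, X x /\ word_at x 0 (size u) = u /\ s = birk f (size u) x.
set M := K * exp (P * INR (size u)) * mu u.
have M0 : 0 < M by do 2 apply: Rmult_lt_0_compat => //; apply: exp_pos.
have E_ub s : E s -> s <= ln M.
  move=> [x [Xx [xu ->]]]; have [_] := exp_birk_bounds (size u) Xx; rewrite xu => hi.
  by rewrite -(ln_exp (birk _ _ _)); apply: ln_le; first exact: exp_pos.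
have [y Xy yu] := inB_word_at0 SFT Bu.
have lubE : is_lub E (Sk X f u).
  have Ey : E (birk f (size u) y) by exists y.
  apply: epsilon_spec; have [s lub] := completeness E (ex_intro _ _ E_ub) (ex_intro _ _ Ey).
  by exists s.
split.
- have [lo _] := exp_birk_bounds (size u) Xy; rewrite yu in lo.
  apply: Rle_trans lo _; apply: exp_le; apply lubE; by exists y.
- by rewrite -(exp_ln M M0); apply: exp_le; apply lubE.
Qed.
End Gibbs.

Lemma subset_avoidE (T : finType) (B H J : {set T}) :
  (J \subset B) && ~~ [exists w in J, w \in H] = (J \subset B :\: H).
Proof.
apply/andP/subsetP => [[/subsetP JB /existsPn JH] i Ji | JBH].
  by rewrite inE JB // andbT; apply: contraTN (JH i) => iH; rewrite Ji iH.
split; first by apply/subsetP => i /JBH; rewrite inE => /andP [].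
apply/existsPn => i; rewrite negb_and; case Ji: (i \in J) => //=.
by move: (JBH i Ji); rewrite inE => /andP [].
Qed.

Section SubsetsAvoiding.
Import ssralg GRing.Theory Rstruct.
Variables (T : finType) (B H : {set T}) (a b : R).
Hypothesis ab1 : a + b = 1.

(* A random subset of [B], each element kept independently with probability [a],
   misses [H] with probability [b ^ #|B :&: H|]: expand
   [\prod_i (a [i in B :\: H] + (if i \in B then b else 1))] over the subsets [J] of [T]. *)
Lemma rsum_subsets_avoiding :
  rsum (enum [set F : {set T} | F \subset B])
    (fun F => a ^ #|F| * b ^ (#|B| - #|F|) * (if ~~ [exists w in F, w \in H] then 1 else 0))
  = b ^ #|B :&: H|.
Proof.
have -> : forall (U : Type) s (F : U -> R), rsum s F = (\sum_(x <- s) F x)%R.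
  by move=> U s F; rewrite unlock.
rewrite big_enum /= RpowE.
under eq_bigr do rewrite !RpowE.
pose Fi i := if i \in B :\: H then a else 0.
pose Gi i := if i \in B then b else 1.
have -> : (b ^+ #|B :&: H| = \prod_i (Fi i + Gi i))%R.
  rewrite -prodr_const big_mkcond /=; apply: eq_bigr => i _.
  by rewrite /Fi /Gi !inE; case: (i \in H); case: (i \in B); rewrite /= ?add0r ?ab1.
rewrite bigA_distr big_mkcond /=; apply: eq_bigr => J _; rewrite inE.
have avoid := subset_avoidE B H J.
case JBH: (J \subset B :\: H).
- move: avoid; rewrite JBH => /andP [JB ->]; rewrite JB /= Rmult_1_r (bigID (mem J)) /=.
  congr (_ * _)%R.
    rewrite (eq_bigr (fun=> a)) ?prodr_const // => i /= Ji.
    by rewrite Ji /Fi (subsetP JBH).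
  rewrite (eq_bigr (fun i => if i \in B then b else 1%R)) => [|i /= /negbTE -> //].
  rewrite -big_mkcondr /= prodr_const; congr (_ ^+ _)%R.
  by rewrite -[in #|J|](setIidPr JB) -cardsD; apply: eq_card => i; rewrite !inE.
- have [i Ji iBH] : exists2 i, i \in J & i \notin B :\: H by apply/subsetPn; rewrite JBH.
  rewrite (bigD1 i) //= Ji /Fi (negbTE iBH) mul0r.
  case JB: (J \subset B) => //.
  by move: avoid; rewrite JB JBH /= => ->; rewrite Rmult_0_r.
Qed.
End SubsetsAvoiding.

Section Expectation.
Variables (A : finType) (X : config A -> Prop) (f : config A -> R) (alpha : R) (n k : nat).

(* The part of [W_n(u)] that the random set [F_n], a subset of [B_n(X)], can meet. *)
Definition subwords_in_B (u : seq A) : {set n.-tuple A} :=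
  Bset X n :&: [set w : n.-tuple A | has_subword n (val w) u].

Lemma Ephi_E :
  Ephi X f alpha n k =
  rsum (enum (Bset X k)) (fun u => exp (Sk X f (val u)) * alpha ^ #|subwords_in_B (val u)|).
Proof.
rewrite /Ephi /phi (eq_rsum _ (G := fun F : {set n.-tuple A} => rsum (enum (Bset X k)) (fun u =>
  (1 - alpha) ^ #|F| * alpha ^ (#|Bset X n| - #|F|) *
  (exp (Sk X f (val u)) * (if xi F (val u) then 1 else 0))))); last by move=> F; rewrite rsumZl.
rewrite rsum_exchange; apply: eq_rsum => u.
rewrite /subwords_in_B -(@rsum_subsets_avoiding _ _ _ (1 - alpha)) -?rsumZl; last by ring.
apply: eq_rsum => F; rewrite /xi.
have -> : [exists w in F, has_subword n (val w) (val u)] =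
          [exists w in F, w \in [set w : n.-tuple A | has_subword n (val w) (val u)]].
  by apply: eq_existsb => w; rewrite inE.
set t := (if _ then _ else _); ring.
Qed.
End Expectation.

Section Windows.
Variables (A : finType) (n : nat).
Implicit Types (u a c : seq A).

Definition window u i := take n (drop i u).

Lemma size_window u i : (i + n <= size u)%N -> size (window u i) = n.
Proof. by move=> iu; rewrite size_take size_drop; case: ltnP => //; lia. Qed.

Lemma window_take m u j : (j + n <= m)%N -> window (take m u) j = window u j.
Proof. by move=> jm; rewrite /window !take_drop take_takel // addnC. Qed.

Lemma window_cat_size a c : size c = n -> window (a ++ c) (size a) = c.
Proof. by move=> cn; rewrite /window drop_size_cat // -cn take_size. Qed.

Lemma window_cat_inj a c c' j : (j < size a)%N -> size c = n -> size c' = n ->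
  window (a ++ c) j = c -> window (a ++ c') j = c' -> c = c'.
Proof.
move=> ja cn c'n ec ec'.
case: c cn ec => [|x0 c] cn ec; first by apply/esym/size0nil; rewrite c'n -cn.
apply: (@eq_from_nth _ x0); rewrite ?cn ?c'n // => i.
elim/ltn_ind: i => i IH lt_in.
rewrite -{1}ec -{1}ec' /window !nth_take // !nth_drop !nth_cat.
by case: ltnP => // le_a; apply: IH; lia.
Qed.

Lemma inB_window (X : config A -> Prop) u i : inB X u -> (i + n <= size u)%N -> inB X (window u i).
Proof.
move=> Bu iu; rewrite -(cat_take_drop (i + n) u) takeD in Bu.
exact: inB_catr (inB_catl Bu).
Qed.

Definition repeated u i := has (fun j => window u j == window u i) (iota 0 i).

Lemma repeated_take m u i : (i + n <= m)%N -> repeated (take m u) i = repeated u i.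
Proof.
move=> im; rewrite /repeated window_take //; apply: eq_in_has => j.
by rewrite mem_iota => /andP [_ ji]; rewrite window_take //; lia.
Qed.
End Windows.

Section RepeatedWindows.
Variables (A : finType) (n : nat) (X : config A -> Prop) (mu : seq A -> R) (K gamma : R) (n0 : nat).
Hypothesis mu_nil : mu [::] = 1.
Hypothesis mu_rcons : forall w, rsum (enum A) (fun a => mu (rcons w a)) = mu w.
Hypothesis mu_ge0 : forall w, 0 <= mu w.
Hypothesis mu_notin_B : forall w, ~ inB X w -> mu w = 0.
Hypothesis mu_cat_le : forall u v, inB X (u ++ v) -> mu (u ++ v) <= K * mu u * mu v.
Hypothesis mu_le_gamma : forall u, inB X u -> (n0 <= size u)%N -> mu u <= gamma ^ size u.
Hypothesis n0n : (n0 <= n)%N.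
Hypothesis K0 : 0 < K.
Hypothesis gamma_ge0 : 0 <= gamma.

Let Kg0 : 0 <= K * gamma ^ n.
Proof. by apply: Rmult_le_pos; [lra | apply: pow_le]. Qed.

Lemma mu_cat_window_le a c : size c = n -> mu (a ++ c) <= K * gamma ^ n * mu a.
Proof.
move=> cn; have := mu_ge0 a; case: (classic (inB X (a ++ c))) => Bac a0; last first.
  by rewrite mu_notin_B //; apply: Rmult_le_pos.
apply: Rle_trans (mu_cat_le Bac) _.
have := mu_le_gamma (inB_catr Bac); rewrite cn => /(_ n0n) c_le.
have : 0 <= K * mu a by apply: Rmult_le_pos; lra.
nra.
Qed.

(* If the window at [s] repeats the one at some [j < s], then the [n] letters
   after the prefix [take s u] are determined by [j]: at most [s] extensions,
   each of measure at most [K gamma^n] times that of the prefix. *)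
Lemma rsum_mu_repeated_le s L (G : seq A -> R) : (s + n <= L)%N -> (forall a, 0 <= G a) ->
  rsum (words A L) (fun u => mu u * ((if repeated n u s then 1 else 0) * G (take s u)))
  <= INR s * (K * gamma ^ n) * rsum (words A s) (fun a => mu a * G a).
Proof.
move=> sL G0.
pose H v := (if repeated n v s then 1 else 0) * G (take s v).
rewrite (eq_rsum _ (G := fun u => mu u * H (take (s + n) u))); last first.
  by move=> u; rewrite /H repeated_take // take_takel // leq_addr.
rewrite (rsum_mu_prefix mu_rcons H sL) rsum_wordsD -rsumZl; apply: ler_rsum => a.
rewrite mem_words => /eqP sa.
rewrite (eq_in_rsum (G := fun c => (if repeated n (a ++ c) s then 1 else 0) * mu (a ++ c) * G a));
  last by move=> c _; rewrite /H take_size_cat // -Rmult_assoc (Rmult_comm (mu _)).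
rewrite rsumZr -!Rmult_assoc; apply: Rmult_le_compat_r => //.
apply: Rle_trans (_ : rsum (words A n) (fun c => rsum (iota 0 s)
  (fun j => if window n (a ++ c) j == c then mu (a ++ c) else 0)) <= _).
  apply: ler_rsum => c; rewrite mem_words => /eqP cn.
  apply: Rle_trans (_ : rsum (iota 0 s)
    (fun j => (if window n (a ++ c) j == c then 1 else 0) * mu (a ++ c)) <= _).
    rewrite rsumZr; apply: Rmult_le_compat_r => //.
    by rewrite /repeated -sa window_cat_size //; apply: has_le_rsum.
  by apply: ler_rsum => j _; case: ifP => _; lra.
rewrite rsum_exchange (_ : _ * _ * _ * _ = rsum (iota 0 s) (fun=> K * gamma ^ n * mu a));
  last by rewrite rsum_const size_iota; ring.
apply: ler_rsum => j.
rewrite mem_iota => /andP [_ js]; apply: rsum_pred_le_single (words_uniq A n) _ _ _.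
- move=> c c'; rewrite !mem_words => /eqP cn /eqP c'n /eqP ec /eqP ec'.
  by apply: window_cat_inj ec ec'; rewrite ?sa.
- by move=> c; rewrite mem_words => /eqP cn _; apply: mu_cat_window_le.
- exact: Rmult_le_pos.
Qed.

(* Listed in decreasing order, so that the induction below peels off the last position. *)
Definition separated L (C : seq nat) :=
  pairwise (fun i j => (j + n <= i)%N) C && all (fun i => (i + n <= L)%N) C.

Lemma rsum_mu_pow_count_repeated_le C L Q : 1 <= Q -> separated L C ->
  rsum (words A L) (fun u => mu u * Q ^ count (repeated n u) C)
  <= (1 + Q * (INR L * (K * gamma ^ n))) ^ size C.
Proof.
move=> Q1; elim: C L => [|s C IH] L.
  move=> _; rewrite (eq_rsum _ (G := mu)) => [|u]; last by rewrite /= Rmult_1_r.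
  by have := rsum_mu_extensions mu_rcons L [::]; rewrite mu_nil /= => ->; right.
rewrite /separated /= => /andP [/andP [Cs pwC] /andP [sL CL]].
pose G (a : seq A) := Q ^ count (repeated n a) C.
have G0 a : 0 <= G a by apply: pow_le; lra.
have GE u : Q ^ count (repeated n u) C = G (take s u).
  rewrite /G; congr (_ ^ _); apply: eq_in_count => i iC.
  by rewrite repeated_take //; move/allP: Cs => /(_ i iC).
set S := rsum (words A s) (fun a => mu a * G a).
have S0 : 0 <= S by apply: rsum_ge0 => a _; apply: Rmult_le_pos.
have IHs : S <= (1 + Q * (INR s * (K * gamma ^ n))) ^ size C by apply: IH; rewrite /separated pwC.
have sL' : (s <= L)%N by apply: leq_trans (leq_addr n s) sL.
have Ls : INR s <= INR L by apply/le_INR/leP.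
apply: Rle_trans (_ : rsum (words A L) (fun u => mu u * G (take s u)) +
  Q * rsum (words A L) (fun u => mu u * ((if repeated n u s then 1 else 0) * G (take s u))) <= _).
  rewrite -rsumZl -rsumD; apply: ler_rsum => u _.
  rewrite [count _ _]/= pow_add GE; have := mu_ge0 u; have := G0 (take s u).
  by case: (repeated n u s) => /=; nra.
rewrite (rsum_mu_prefix mu_rcons _ sL') -/S.
have := rsum_mu_repeated_le sL G0; rewrite -/S => rep_le.
have b0 : 0 <= Q * (INR s * (K * gamma ^ n)).
  by apply: Rmult_le_pos; [lra | apply: Rmult_le_pos; [apply: pos_INR | exact: Kg0]].
apply: Rle_trans (_ : (1 + Q * (INR s * (K * gamma ^ n))) * S <= _).
  by have := Rmult_le_compat_l Q _ _ (ltac:(lra)) rep_le; nra.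
have bL : 1 + Q * (INR s * (K * gamma ^ n)) <= 1 + Q * (INR L * (K * gamma ^ n)).
  by apply/Rplus_le_compat_l/Rmult_le_compat_l; [lra | apply: Rmult_le_compat_r].
apply: Rmult_le_compat => //; first lra.
apply: Rle_trans IHs _; apply: pow_incr; lra.
Qed.
End RepeatedWindows.

Lemma eqmod_gap n x y : (0 < n)%N -> x %% n = y %% n -> (y < x)%N -> (y + n <= x)%N.
Proof.
move=> n0 exy yx; have ex := divn_eq x n; have ey := divn_eq y n.
rewrite exy in ex; set a := x %/ n in ex; set b := y %/ n in ey.
have ba : (b < a)%N by rewrite -(ltn_pmul2r n0); lia.
have : (b.+1 * n <= a * n)%N by rewrite leq_pmul2r.
lia.
Qed.

Lemma count_residue_classes n (p : pred nat) s : (0 < n)%N ->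
  count p s = (\sum_(r < n) count p [seq i <- s | i %% n == r])%N.
Proof.
move=> n0; elim: s => [|x s IH]; first by rewrite big1.
under eq_bigr => r _ do rewrite count_filter.
rewrite /= big_split /= IH; congr (_ + _)%N; last by apply: eq_bigr => r _; rewrite count_filter.
case: (p x); last by rewrite big1.
rewrite (bigD1 (Ordinal (ltn_pmod x n0))) //= eqxx big1 // => r /negbTE rx.
by apply/eqP; rewrite eqb0; apply: contraFN rx => /eqP xr; apply/eqP/val_inj.
Qed.

Lemma count_le_residue_class n (p : pred nat) s : (0 < n)%N ->
  exists2 r, (r < n)%N & (count p s <= n * count p [seq i <- s | i %% n == r])%N.
Proof.
move=> n0; have I_n0 : (0 < #|'I_n|)%N by rewrite card_ord.
have [r0 r0max] := eq_bigmax (fun r : 'I_n => count p [seq i <- s | i %% n == r]) I_n0.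
exists r0 => //; rewrite (count_residue_classes p s n0) -r0max -[n in (n * _)%N]card_ord.
rewrite -sum_nat_const; apply: leq_sum => r _.
exact: (@leq_bigmax _ (fun r1 : 'I_n => count p [seq i <- s | i %% n == r1]) r).
Qed.

Lemma pow_count_le_residue_classes n (p : pred nat) s q : (0 < n)%N -> 1 <= q ->
  q ^ count p s <= rsum (iota 0 n) (fun r => (q ^ n) ^ count p [seq i <- s | i %% n == r]).
Proof.
move=> n0 q1; have [r rn le_cnt] := count_le_residue_class p s n0.
apply: Rle_trans (_ : (q ^ n) ^ count p [seq i <- s | i %% n == r] <= _).
  by rewrite -pow_mult; apply: Rle_pow => //; apply/leP.
apply: (ler_term_rsum (F := fun r => (q ^ n) ^ count p [seq i <- s | i %% n == r])).
  by move=> r' _; do 2 apply: pow_le; lra.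
by rewrite mem_iota.
Qed.

Lemma separated_residue_class n k r : (0 < n)%N -> (n <= k)%N ->
  separated n k [seq i <- rev (iota 0 (k - n + 1)) | i %% n == r].
Proof.
move=> n0 nk; apply/andP; split.
  have desc : pairwise (fun i j => (j < i)%N) (rev (iota 0 (k - n + 1))).
    rewrite -sorted_pairwise; last by move=> a b c ba cb; apply: ltn_trans cb ba.
    by rewrite rev_sorted; apply: iota_ltn_sorted.
  apply: (sub_in_pairwise (P := fun i => i %% n == r)) (pairwise_filter _ desc).
    by move=> x y /eqP xr /eqP yr; apply: eqmod_gap; rewrite ?xr ?yr.
  by apply/allP => x; rewrite mem_filter => /andP [].
by apply/allP => x; rewrite mem_filter mem_rev mem_iota => /andP [_ /andP [_ ?]]; lia.
Qed.

Section SubwordCount.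
Variables (A : finType) (X : config A -> Prop) (n k : nat).

Lemma card_subwords_in_B_le (u : k.-tuple A) : (#|subwords_in_B X n (val u)| <= k - n + 1)%N.
Proof.
rewrite cardE -(size_map val) -(size_iota 0 (k - n + 1)) -(size_map (window n (val u))).
apply: uniq_leq_size; first by rewrite (map_inj_uniq val_inj) enum_uniq.
move=> w /mapP [t]; rewrite mem_enum !inE => /andP [_] + ->.
by rewrite /has_subword size_tuple => /hasP [i iI /eqP <-]; apply: map_f.
Qed.

Lemma card_subwords_in_B_ge (u : k.-tuple A) : (n <= k)%N -> inB X (val u) ->
  (count (predC (repeated n (val u))) (iota 0 (k - n + 1)) <= #|subwords_in_B X n (val u)|)%N.
Proof.
move=> nk Bu; rewrite cardE -(size_map val) -size_filter -(size_map (window n (val u))).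
apply: uniq_leq_size.
  rewrite map_inj_in_uniq ?filter_uniq ?iota_uniq // => i j.
  rewrite !mem_filter !mem_iota /= => /andP [ni _] /andP [nj _] eij.
  case: (ltngtP i j) => // [ij | ji].
    by case/negP: nj; apply/hasP; exists i; rewrite ?mem_iota ?eij.
  by case/negP: ni; apply/hasP; exists j; rewrite ?mem_iota ?eij.
move=> w /mapP [i]; rewrite mem_filter mem_iota => /andP [_ /andP [_ ik]] ->.
have iu : (i + n <= size (val u))%N by rewrite size_tuple; lia.
have /eqP wn := size_window iu.
apply/mapP; exists (Tuple wn) => //; rewrite mem_enum !inE; apply/andP; split.
  exact/asboolP/inB_window.
by rewrite /has_subword size_tuple; apply/hasP; exists i; rewrite ?mem_iota //; lia.
Qed.
End SubwordCount.

Section ExpectationBounds.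
Variables (A : finType) (X : config A -> Prop) (f : config A -> R) (mu : seq A -> R)
  (P K alpha gamma : R) (n0 : nat).
Hypothesis SFT : is_SFT X.
Hypothesis mu_inv : shift_inv_prob X mu.
Hypothesis K1 : 1 < K.
Hypothesis gibbs : forall (m : nat) (x : config A), (1 <= m)%N -> X x ->
  / K <= mu (word_at x 0 m) / exp (- P * INR m + birk f m x) <= K.
Hypothesis mu_cat_le : forall u v, inB X (u ++ v) -> mu (u ++ v) <= K * mu u * mu v.
Hypothesis alpha01 : 0 < alpha <= 1.
Hypothesis gamma_ge0 : 0 <= gamma.
Hypothesis mu_le_gamma : forall u, inB X u -> (n0 <= size u)%N -> mu u <= gamma ^ size u.

Let mu_ge0 : forall w, 0 <= mu w. Proof. by case: mu_inv. Qed.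
Let mu_nil : mu [::] = 1. Proof. by case: mu_inv. Qed.
Let mu_rcons : forall w, rsum (enum A) (fun a => mu (rcons w a)) = mu w.
Proof. by case: mu_inv. Qed.
Let mu_notin_B : forall w, ~ inB X w -> mu w = 0. Proof. by case: mu_inv. Qed.

Lemma rsum_mu_Bset k : rsum (enum (Bset X k)) (fun t => mu (val t)) = 1.
Proof.
rewrite rsum_enum_set (eq_rsum _ (G := fun t => mu (val t))).
  by rewrite rsum_tuples -mu_nil -(rsum_mu_extensions mu_rcons k [::]).
move=> t; case: ifP => // tB; rewrite mu_notin_B // => Bt.
by move: tB; rewrite inE; move/asboolP: Bt => ->.
Qed.

Lemma Ephi_lower_bound n k : (n <= k)%N ->
  / K * alpha ^ (k - n + 1) * exp (P * INR k) <= Ephi X f alpha n k.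
Proof.
move=> nk; rewrite Ephi_E -[_ * exp _]Rmult_1_r -(rsum_mu_Bset k) -rsumZl.
apply: ler_rsum => t; rewrite mem_enum inE => /asboolP Bt.
have [lo _] := Sk_bounds SFT mu_nil K1 gibbs Bt; rewrite size_tuple in lo.
have aW : alpha ^ (k - n + 1) <= alpha ^ #|subwords_in_B X n (val t)|.
  by apply: pow_le_decr; [lra | apply: card_subwords_in_B_le].
have c0 : 0 <= / K * exp (P * INR k) * mu (val t).
  apply: Rmult_le_pos => //; apply: Rmult_le_pos; first by apply/Rlt_le/Rinv_0_lt_compat; lra.
  exact/Rlt_le/exp_pos.
have a0 : 0 <= alpha ^ (k - n + 1) by apply: pow_le; lra.
apply: Rle_trans (_ : / K * exp (P * INR k) * mu (val t) * alpha ^ (k - n + 1) <= _).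
  by right; rewrite !Rmult_assoc; congr (_ * _); rewrite Rmult_comm Rmult_assoc.
by apply: Rmult_le_compat.
Qed.

(* Split the positions by their residue mod [n] (the largest class dominates), so that
   each class is [separated]. *)
Lemma rsum_mu_pow_repeated_le n k : (0 < n)%N -> (n <= k)%N -> (n0 <= n)%N ->
  rsum (words A k) (fun u => mu u * (/ alpha) ^ count (repeated n u) (iota 0 (k - n + 1)))
  <= INR n * (1 + (/ alpha) ^ n * (INR k * (K * gamma ^ n))) ^ (k - n + 1).
Proof.
move=> n_gt0 nk n0n; have ia1 : 1 <= / alpha by rewrite -Rinv_1; apply: Rinv_le_contravar; lra.
set s := rev (iota 0 (k - n + 1)); set b := 1 + _ * _.
have b1 : 1 <= b.
  have : 0 <= (/ alpha) ^ n * (INR k * (K * gamma ^ n)); last by rewrite /b; lra.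
  apply: Rmult_le_pos; first by apply: pow_le; lra.
  by apply: Rmult_le_pos; [apply: pos_INR | apply: Rmult_le_pos; [lra | apply: pow_le]].
apply: Rle_trans (_ : rsum (words A k) (fun u => rsum (iota 0 n) (fun r =>
  mu u * ((/ alpha) ^ n) ^ count (repeated n u) [seq i <- s | i %% n == r])) <= _).
  apply: ler_rsum => u _; rewrite rsumZl; apply: Rmult_le_compat_l => //.
  by rewrite -(count_rev _ (iota 0 _)); apply: pow_count_le_residue_classes.
rewrite rsum_exchange (_ : INR n * _ = rsum (iota 0 n) (fun=> b ^ (k - n + 1)));
  last by rewrite rsum_const size_iota.
apply: ler_rsum => r _; apply: Rle_trans (_ : b ^ size [seq i <- s | i %% n == r] <= _).
  apply: (rsum_mu_pow_count_repeated_le mu_nil mu_rcons mu_ge0 mu_notin_B mu_cat_le mu_le_gamma)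
    => //; [lra | exact: pow_R1_Rle | exact: separated_residue_class].
apply: Rle_pow => //; apply/leP.
by rewrite size_filter (leq_trans (count_size _ _)) // size_rev size_iota.
Qed.

(* The windows at non-repeated positions are distinct elements of [W_n(u)], so
   [alpha ^ #|W_n(u)| <= alpha ^ l * (/ alpha) ^ (number of repeats)]. *)
Lemma Ephi_upper_bound n k : (0 < n)%N -> (n <= k)%N -> (n0 <= n)%N ->
  Ephi X f alpha n k <= K * exp (P * INR k) * alpha ^ (k - n + 1) *
    (INR n * (1 + (/ alpha) ^ n * (INR k * (K * gamma ^ n))) ^ (k - n + 1)).
Proof.
move=> n_gt0 nk n0n; rewrite Ephi_E; set l := (k - n + 1)%N.
have Ke0 : 0 <= K * exp (P * INR k) by have := exp_pos (P * INR k); nra.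
have ia0 : 0 <= / alpha by apply/Rlt_le/Rinv_0_lt_compat; lra.
apply: Rle_trans (_ : rsum (enum (Bset X k)) (fun t => K * exp (P * INR k) * alpha ^ l *
  (mu (val t) * (/ alpha) ^ count (repeated n (val t)) (iota 0 l))) <= _).
  apply: ler_rsum => t; rewrite mem_enum inE => /asboolP Bt.
  have [_ hi] := Sk_bounds SFT mu_nil K1 gibbs Bt; rewrite size_tuple in hi.
  set c := count (repeated n (val t)) (iota 0 l).
  have cl : (c + count (predC (repeated n (val t))) (iota 0 l) = l)%N.
    by rewrite count_predC size_iota.
  have aW : alpha ^ #|subwords_in_B X n (val t)| <= alpha ^ l * (/ alpha) ^ c.
    rewrite -{1}cl addnC pow_add Rmult_assoc -Rpow_mult_distr Rinv_r ?pow1 ?Rmult_1_r; last lra.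
    by apply: pow_le_decr; [lra | apply: card_subwords_in_B_ge].
  apply: Rle_trans (_ : K * exp (P * INR k) * mu (val t) * (alpha ^ l * (/ alpha) ^ c) <= _).
    by apply: Rmult_le_compat => //; [exact/Rlt_le/exp_pos | apply: pow_le; lra].
  by right; move: (K * _) (mu _) (alpha ^ l) ((/ alpha) ^ c) => x y z w; ring.
rewrite rsumZl; apply: Rmult_le_compat_l; first by apply: Rmult_le_pos => //; apply: pow_le; lra.
apply: Rle_trans (rsum_mu_pow_repeated_le n_gt0 nk n0n).
rewrite -rsum_tuples rsum_enum_set; apply: ler_rsum => t _.
by case: ifP => _; [right | apply: Rmult_le_pos => //; apply: pow_le].
Qed.
End ExpectationBounds.

Lemma pow_pos_eventually g N : (forall m, (N <= m)%N -> 0 < g ^ m) -> 0 < g.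
Proof.
move=> gN; have g1 := gN N.+1 (leqnSn N); have g2 := gN N.+2 (leqW (leqnSn N)).
rewrite (_ : g ^ N.+2 = g * g ^ N.+1) // in g2; case: (Rle_or_lt g 0) => // g0; nra.
Qed.

Lemma Un_cv_const c : Un_cv (fun=> c) c.
Proof. by move=> eps eps0; exists 0%nat => m _; rewrite /R_dist Rminus_diag Rabs_R0. Qed.

Lemma Un_cv_dist_le u e l N :
  (forall n, (N <= n)%N -> Rabs (u n - l) <= e n) -> Un_cv e 0 -> Un_cv u l.
Proof.
move=> ue e0 eps eps0; have [M Me] := e0 eps eps0; exists (maxn N M) => n /leP.
rewrite geq_max => /andP [Nn Mn]; apply: Rle_lt_trans (ue n Nn) _.
by have := Me n (leP Mn); rewrite /R_dist Rminus_0_r => /Rabs_def2 [].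
Qed.

Lemma Un_cv_le_eventually u v N :
  (forall n, (N <= n)%N -> 0 <= u n <= v n) -> Un_cv v 0 -> Un_cv u 0.
Proof.
move=> uv; apply: Un_cv_dist_le => n /uv uvn.
by rewrite Rminus_0_r Rabs_right; lra.
Qed.

Lemma Un_cv_inv_INR : Un_cv (fun n => / INR n) 0.
Proof.
apply: cv_infty_cv_0 => M; have [N MN] := INR_unbounded M.
by exists N.+1 => n /le_INR; rewrite S_INR; lra.
Qed.

Lemma ln_le_sqrt x : 1 <= x -> ln x <= 2 * sqrt x.
Proof.
move=> x1; have sx0 : 0 < sqrt x by apply: sqrt_lt_R0; lra.
rewrite -{1}(sqrt_sqrt x) ?ln_mult //; last lra.
by have := exp_ineq1_le (ln (sqrt x)); rewrite exp_ln //; lra.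
Qed.

Lemma Un_cv_ln_INR_div : Un_cv (fun n => ln (INR n) / INR n) 0.
Proof.
apply: (Un_cv_le_eventually (v := fun n => 2 * / sqrt (INR n)) (N := 1)).
  move=> n n1; have x1 : 1 <= INR n by apply: (le_INR 1); apply/leP.
  have sx0 : 0 < sqrt (INR n) by apply: sqrt_lt_R0; lra.
  split; first by apply: Rmult_le_pos; [rewrite -ln_1; apply: ln_le | apply/Rlt_le/Rinv_0_lt_compat]; lra.
  have -> : 2 * / sqrt (INR n) = 2 * sqrt (INR n) / INR n.
    by rewrite -{3}(sqrt_sqrt (INR n)); [field | ]; lra.
  by apply: Rmult_le_compat_r; [apply/Rlt_le/Rinv_0_lt_compat; lra | apply: ln_le_sqrt].
rewrite -(Rmult_0_r 2); apply: CV_mult (Un_cv_const 2) _.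
apply: cv_infty_cv_0 => M; have [N MN] := INR_unbounded (M * M).
have MM := Rle_0_sqr M; rewrite /Rsqr in MM.
exists N => n /le_INR Nn.
case: (Rle_or_lt M 0) => [M0 | M0]; first by apply: Rle_lt_trans M0 _; apply: sqrt_lt_R0; lra.
rewrite -(sqrt_Rsqr M); last lra.
by apply: sqrt_lt_1; rewrite /Rsqr; lra.
Qed.

Lemma Un_cv_sqr_pow rho : 0 < rho < 1 -> Un_cv (fun n => INR n ^ 2 * rho ^ n) 0.
Proof.
move=> rho01; set c := - ln rho.
have c0 : 0 < c by have := ln_increasing rho 1 (proj1 rho01) (proj2 rho01); rewrite ln_1 /c; lra.
have c4 : c / 4 > 0 by lra.
have [N lnN] := Un_cv_ln_INR_div c4.
apply: (Un_cv_le_eventually (v := fun n => 2 / c * / INR n) (N := N.+1)); last first.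
  by rewrite -(Rmult_0_r (2 / c)); apply: CV_mult (Un_cv_const _) Un_cv_inv_INR.
move=> m Nm; have m0 : 0 < INR m by apply/lt_0_INR/ltP; apply: leq_trans Nm.
split; first by apply: Rmult_le_pos; apply: pow_le; lra.
have := lnN m (leP (ltnW Nm)); rewrite /R_dist Rminus_0_r => /Rabs_def2 [lnm _].
have {}lnm : ln (INR m) <= c / 4 * INR m.
  have := Rmult_le_compat_r (INR m) _ _ (Rlt_le _ _ m0) (Rlt_le _ _ lnm).
  by rewrite /Rdiv Rmult_assoc Rinv_l ?Rmult_1_r; lra.
have -> : INR m ^ 2 * rho ^ m = exp (2 * ln (INR m) - c * INR m).
  have e1 : ln (INR m ^ 2) = 2 * ln (INR m) by rewrite ln_pow //; simpl INR; ring.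
  have e2 : ln (rho ^ m) = - c * INR m by rewrite ln_pow /c; [ring | lra].
  by rewrite /Rminus exp_plus Ropp_mult_distr_l -e1 -e2 !exp_ln //; apply: pow_lt; lra.
set t := c * INR m / 2; have t0 : 0 < t by rewrite /t; nra.
apply: Rle_trans (_ : exp (- t) <= _); first by apply: exp_le; rewrite /t; lra.
rewrite exp_Ropp (_ : 2 / c * / INR m = / t); last by rewrite /t; field; lra.
by apply: Rinv_le_contravar => //; have := exp_ineq1_le t; lra.
Qed.

Lemma INR_subn_add1 a b : (b <= a)%N -> INR (a - b + 1) = INR a - INR b + 1.
Proof.
move=> ba; have /(f_equal INR) : (a - b + 1 + b = a + 1)%N by lia.
by rewrite !plus_INR /=; lra.
Qed.

Lemma ln_div_error E P a K z k n (l : nat) :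
  1 <= n <= k -> INR l = k - n + 1 -> 0 < a <= 1 -> 1 < K -> 0 <= z ->
  / K * a ^ l * exp (P * k) <= E -> E <= K * exp (P * k) * a ^ l * (n * (1 + z) ^ l) ->
  Rabs (ln E / k - (P + ln a)) <= (n / k + / k) * - ln a + ln K * / k + ln n / k + z.
Proof.
move=> [n1 nk] lE a01 K1 z0 lo hi.
have a0 : 0 < a ^ l by apply: pow_lt; lra.
have e0 := exp_pos (P * k).
have Ki : 0 < / K by apply: Rinv_0_lt_compat; lra.
have Ka : 0 < / K * a ^ l by apply: Rmult_lt_0_compat.
have lo0 : 0 < / K * a ^ l * exp (P * k) by apply: Rmult_lt_0_compat.
have z1 : 0 < (1 + z) ^ l by apply: pow_lt; lra.
have lna : ln a <= 0 by rewrite -ln_1; apply: ln_le; lra.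
have lnK : 0 < ln K by rewrite -ln_1; apply: ln_increasing; lra.
have lnn : 0 <= ln n by rewrite -ln_1; apply: ln_le; lra.
have lnz : 0 <= ln (1 + z) <= z.
  by rewrite -ln_1; split; [apply: ln_le | have := exp_ineq1_le (ln (1 + z)); rewrite exp_ln]; lra.
have lnE_lo : - ln K + INR l * ln a + P * k <= ln E.
  apply: Rle_trans _ _ _ _ (ln_le lo0 lo); right.
  by rewrite !ln_mult // ln_Rinv ?ln_pow ?ln_exp //; lra.
have lnE_hi : ln E <= ln K + P * k + INR l * ln a + ln n + INR l * ln (1 + z).
  apply: Rle_trans _ _ _ (ln_le (Rlt_le_trans _ _ _ lo0 lo) hi) _; right.
  by rewrite !ln_mult ?ln_pow ?ln_exp //; try lra; repeat apply: Rmult_lt_0_compat; lra.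
have lz : INR l * ln (1 + z) <= k * z by rewrite lE; nra.
have na : 0 <= (n - 1) * - ln a by nra.
have kz : 0 <= k * z by nra.
have key : Rabs (ln E - P * k - k * ln a) <= (n + 1) * - ln a + ln K + ln n + k * z.
  by rewrite lE in lnE_lo lnE_hi lz; apply: Rabs_le; lra.
have -> : ln E / k - (P + ln a) = (ln E - P * k - k * ln a) * / k by field; lra.
have ik : 0 < / k by apply: Rinv_0_lt_compat; lra.
rewrite Rabs_mult (Rabs_right (/ k)); last lra.
apply: Rle_trans (Rmult_le_compat_r _ _ _ (Rlt_le _ _ ik) key) _.
by right; field; lra.
Qed.

Lemma correction_term_ge0 a K g m n : 0 < a -> 0 < K -> 0 <= g ->
  0 <= (/ a) ^ n * (INR m * (K * g ^ n)).
Proof.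
move=> a0 K0 g0; apply: Rmult_le_pos; first by apply/pow_le/Rlt_le/Rinv_0_lt_compat.
by apply: Rmult_le_pos; [apply: pos_INR | apply: Rmult_le_pos; [lra | apply: pow_le]].
Qed.

Section GrowthOfK.
Variables (k : nat -> nat) (n0 : nat).
Hypothesis n_div_k : Un_cv (fun n => INR n / INR (k n)) 0.
Hypothesis k_ln_div_sqr : Un_cv (fun n => INR (k n) * ln (INR n) / (INR n ^ 2)) 0.
Hypothesis n_le_k : forall n, (n0 <= n)%N -> (n <= k n)%N.

Lemma INR_n_le_k n : (maxn n0 1 <= n)%N -> 1 <= INR n <= INR (k n).
Proof.
rewrite geq_max => /andP [n0n n1]; split; first exact/(le_INR 1)/leP.
exact/le_INR/leP/n_le_k.
Qed.

Lemma Un_cv_inv_k : Un_cv (fun n => / INR (k n)) 0.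
Proof.
apply: (Un_cv_le_eventually (N := maxn n0 1)) Un_cv_inv_INR => n /INR_n_le_k nk.
by split; [apply/Rlt_le/Rinv_0_lt_compat | apply: Rinv_le_contravar]; lra.
Qed.

Lemma Un_cv_ln_div_k : Un_cv (fun n => ln (INR n) / INR (k n)) 0.
Proof.
apply: (Un_cv_le_eventually (N := maxn n0 1)) Un_cv_ln_INR_div => n /INR_n_le_k nk.
have ln0 : 0 <= ln (INR n) by rewrite -ln_1; apply: ln_le; lra.
split; first by apply: Rmult_le_pos => //; apply/Rlt_le/Rinv_0_lt_compat; lra.
by apply: Rmult_le_compat_l => //; apply: Rinv_le_contravar; lra.
Qed.

Lemma k_le_sqr : exists N, forall n, (N <= n)%N -> INR (k n) <= INR n ^ 2.
Proof.
have [N kN] := k_ln_div_sqr Rlt_0_1; exists (maxn N 3) => n; rewrite geq_max => /andP [Nn n3].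
have n3' : 3 <= INR n by have := le_INR 3 n (leP n3); rewrite [INR 3]/=; lra.
have ln1 : 1 <= ln (INR n).
  by rewrite -(ln_exp 1); apply: ln_le; [apply: exp_pos | have := exp_le_3; lra].
have n2 : 0 < INR n ^ 2 by apply: pow_lt; lra.
have := kN n (leP Nn); rewrite /R_dist Rminus_0_r => /Rabs_def2 [kn _].
have := Rmult_lt_compat_r _ _ _ n2 kn; rewrite /Rdiv Rmult_assoc Rinv_l ?Rmult_1_r; last lra.
by have := pos_INR (k n); nra.
Qed.

Lemma Un_cv_k_pow rho : 0 < rho < 1 -> Un_cv (fun n => INR (k n) * rho ^ n) 0.
Proof.
move=> rho01; have [N kN] := k_le_sqr.
apply: (Un_cv_le_eventually (N := N)) (Un_cv_sqr_pow rho01) => n /kN kn.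
have r0 : 0 <= rho ^ n by apply: pow_le; lra.
by split; [apply: Rmult_le_pos => //; exact: pos_INR | nra].
Qed.

Lemma Un_cv_ln_Ephi_error a K g : 0 < g < a -> 0 < K ->
  Un_cv (fun n => (INR n / INR (k n) + / INR (k n)) * - ln a + ln K * / INR (k n) +
    ln (INR n) / INR (k n) + (/ a) ^ n * (INR (k n) * (K * g ^ n))) 0.
Proof.
move=> ga K0; have rho01 : 0 < g / a < 1.
  split; first by apply: Rdiv_lt_0_compat; lra.
  by apply: (Rmult_lt_reg_r a); [lra | rewrite /Rdiv Rmult_assoc Rinv_l; lra].
have z0 : Un_cv (fun n => (/ a) ^ n * (INR (k n) * (K * g ^ n))) 0.
  have := CV_mult _ _ _ _ (Un_cv_const K) (Un_cv_k_pow rho01); rewrite Rmult_0_r.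
  apply: (Un_cv_le_eventually (N := 0)) => n _.
  rewrite /Rdiv Rpow_mult_distr (Rmult_comm (g ^ n)); split; last by right; ring.
  by apply: correction_term_ge0; lra.
have := CV_plus _ _ _ _ (CV_plus _ _ _ _ (CV_plus _ _ _ _
  (CV_mult _ _ _ _ (CV_plus _ _ _ _ n_div_k Un_cv_inv_k) (Un_cv_const (- ln a)))
  (CV_mult _ _ _ _ (Un_cv_const (ln K)) Un_cv_inv_k)) Un_cv_ln_div_k) z0.
by rewrite Rplus_0_l Rmult_0_l Rmult_0_r !Rplus_0_l.
Qed.
End GrowthOfK.

Theorem mainTheorem11 (A : finType) (X : config A -> Prop) (f : config A -> R)
    (mu : seq A -> R) (P K alpha gamma : R) (n0 : nat) (k : nat -> nat) :
  is_SFT X -> nontrivial X -> top_mixing X -> holder X f ->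
  is_pressure X f P ->
  shift_inv_prob X mu ->
  1 < K ->
  (forall (m : nat) (x : config A), (1 <= m)%N -> X x ->
     / K <= mu (word_at x 0 m) / exp (- P * INR m + birk f m x) <= K) ->
  (forall u v : seq A, inB X (u ++ v) ->
     mu (u ++ v) <= K * mu u * mu v /\ mu (u ++ v) / mu u <= K * mu v) ->
  gamma0 X mu < alpha <= 1 ->
  gamma0 X mu < gamma < alpha ->
  (forall u : seq A, inB X u -> (n0 <= size u)%N -> mu u <= gamma ^ size u) ->
  Un_cv (fun n => INR n / INR (k n)) 0 ->
  Un_cv (fun n => INR (k n) * ln (INR n) / (INR n ^ 2)) 0 ->
  (forall n : nat, (n0 <= n)%N -> (n <= k n)%N) ->
  (forall n : nat, (n0 <= n)%N ->
     / K * alpha ^ (k n - n + 1) * exp (P * INR (k n)) <= Ephi X f alpha n (k n))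
  /\ Un_cv (fun n => ln (Ephi X f alpha n (k n)) / INR (k n)) (P + ln alpha).
Proof.
move=> SFT [x [_ [Xx _]]] _ _ _ mu_inv K1 gibbs mu_cat [_ alpha1] [_ gamma_alpha] mu_le_gamma
  n_div_k k_ln_div_sqr n_le_k.
have mu_nil : mu [::] = 1 by case: mu_inv.
have mu_cat_le u v : inB X (u ++ v) -> mu (u ++ v) <= K * mu u * mu v by case/mu_cat.
have gamma_gt0 : 0 < gamma.
  apply: (pow_pos_eventually (N := n0)) => m n0m; have Bx := inB_word_at m Xx.
  apply: Rlt_le_trans (mu_pos SFT mu_nil K1 gibbs Bx) _.
  by rewrite -{2}(size_word_at x 0 m); apply: mu_le_gamma; rewrite ?size_word_at.
have alpha01 : 0 < alpha <= 1 by lra.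
have lower n (n0n : (n0 <= n)%N) := Ephi_lower_bound SFT mu_inv K1 gibbs alpha01 (n_le_k _ n0n).
have gamma_bounds : 0 < gamma < alpha by lra.
have K0 : 0 < K by lra.
split=> //; apply: (Un_cv_dist_le (N := maxn n0 1) _
  (Un_cv_ln_Ephi_error n_div_k k_ln_div_sqr n_le_k gamma_bounds K0)).
move=> n Nn; have n_bounds := INR_n_le_k n_le_k Nn; move: Nn; rewrite geq_max => /andP [n0n n1].
apply: ln_div_error (lower n n0n) (Ephi_upper_bound SFT mu_inv K1 gibbs mu_cat_le alpha01 _
  mu_le_gamma n1 (n_le_k _ n0n) n0n) => //; try lra.
- exact/INR_subn_add1/n_le_k.
- by apply: correction_term_ge0; lra.
Qed.
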